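(* Let $m$ be a positive integer and $I=\{m\}$. If $z_0\in\mathbb C$ satisfies $d(I;z_0)=0$, then $|z_0|\le m$ and $\mathrm{Re}(z_0)\ge -1$.
   Context: For a finite set $I$ of positive integers, $d(I;z)$ denotes the descent polynomial: the unique polynomial whose value at each integer $n>\max(I\cup\{0\})$ is the number of permutations $\pi\in\mathfrak S_n$ with $\{j\mid\pi_j>\pi_{j+1}\}=I$, evaluated at a complex number $z$. (For $I=\{m\}$ one has $d(I;z)=\binom{z}{m}-1$, with $\binom{z}{m}=z(z-1)\cdots(z-m+1)/m!$.) *)

From HB Require Import structures.
From mathcomp Require Import all_boot all_order all_algebra.
Set Implicit Arguments. Unset Strict Implicit. Unset Printing Implicit Defensive.
Import Order.TTheory GRing.Theory Num.Theory.
Local Open Scope ring_scope.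

Definition binomz (C : fieldType) (z : C) (m : nat) : C :=
  (\prod_(i < m) (z - i%:R)) / (m`!)%:R.

(* Descent polynomial of the singleton set I = {m}, as given in the
   context: d({m}; z) = binom(z, m) - 1. *)
Definition descent_poly_single (C : fieldType) (m : nat) (z : C) : C :=
  binomz z m - 1.

(* A root z of binom(z, m) - 1 satisfies prod_(i < m) |z - i| = m!.  If |z| > m, each
   factor exceeds the matching factor of m! = prod_(i < m) (m - i); if Re z < -1, each
   factor exceeds the matching factor of m! = prod_(i < m) (i + 1).  Either way the
   product would be strictly larger than m!. *)
From HB Require Import structures.
From mathcomp Require Import all_boot all_order all_algebra.
Import Order.TTheory GRing.Theory Num.Theory.
Local Open Scope ring_scope.

(* No characteristic assumption: if m! vanishes in C, then binomz z m = 0 and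
   descent_poly_single m z = -1. *)
Lemma descent_poly_single_eq0 (C : fieldType) (m : nat) (z : C) :
  descent_poly_single m z = 0 -> \prod_(i < m) (z - i%:R) = (m`!)%:R.
Proof.
rewrite /descent_poly_single /binomz => /eqP; rewrite subr_eq0 => /eqP binom1.
have [fact0 | fact_neq0] := eqVneq ((m`!)%:R : C) 0.
  by move: binom1; rewrite fact0 invr0 mulr0 => /eqP; rewrite eq_sym oner_eq0.
by rewrite -(divfK fact_neq0 (\prod_(i < m) _)) binom1 mul1r.
Qed.

Lemma fact_lt_norm_prod_sub_nat {R : numDomainType} {m : nat} {z : R} {a : nat -> nat} :
  (0 < m)%N -> (\prod_(i < m) a i)%N = m`! ->
  (forall i, (i < m)%N -> (a i)%:R < `|z - i%:R|) ->
  (m`!)%:R < `|\prod_(i < m) (z - i%:R)|.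
Proof.
move=> m_gt0 prod_a a_lt.
rewrite -prod_a natr_prod normr_prod.
rewrite -(big_mkord xpredT (fun i => (a i)%:R)) -(big_mkord xpredT (fun i => `|z - i%:R|)).
by apply: ltr_prod_nat => // i /andP[_ i_lt_m]; rewrite ler0n a_lt.
Qed.

Lemma prod_subn_eq_fact (m : nat) : (\prod_(i < m) (m - i))%N = m`!.
Proof. by rewrite -ffact_prod ffactnn. Qed.

Lemma prod_succ_eq_fact (m : nat) : (\prod_(i < m) i.+1)%N = m`!.
Proof. by rewrite fact_prod big_add1 big_mkord. Qed.

Lemma subn_lt_norm_sub_nat {R : numDomainType} {m i : nat} {z : R} :
  (i < m)%N -> m%:R < `|z| -> (m - i)%:R < `|z - i%:R|.
Proof.
move=> i_lt_m z_big; apply: lt_le_trans (lerB_dist _ _).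
by rewrite natrB ?(ltnW i_lt_m) // normr_nat ltrD2r.
Qed.

Lemma succ_lt_norm_sub_nat {C : numClosedFieldType} (i : nat) {z : C} :
  'Re z < -1 -> i.+1%:R < `|z - i%:R|.
Proof.
move=> Re_lt; rewrite distrC; apply: lt_le_trans (leif_Re_Creal _).
rewrite raddfB /= (Creal_ReP _ (realn _ i)) -addn1 natrD ltrD2l.
by rewrite -ltrN2 opprK.
Qed.

Theorem theorem4p4 (C : numClosedFieldType) (m : nat) (z0 : C) :
  (0 < m)%N ->
  descent_poly_single m z0 = 0 ->
  `|z0| <= m%:R /\ -1 <= 'Re z0.
Proof.
move=> m_gt0 /descent_poly_single_eq0 prod_eq.
have norm_prod : `|\prod_(i < m) (z0 - i%:R)| = (m`!)%:R by rewrite prod_eq normr_nat.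
split.
- rewrite real_leNgt ?realn ?normr_real //; apply/negP => z0_big.
  have := fact_lt_norm_prod_sub_nat m_gt0 (prod_subn_eq_fact m)
    (fun i i_lt_m => subn_lt_norm_sub_nat i_lt_m z0_big).
  by rewrite norm_prod ltxx.
- rewrite real_leNgt ?Creal_Re ?realN ?realn //; apply/negP => Re_lt.
  have := fact_lt_norm_prod_sub_nat m_gt0 (prod_succ_eq_fact m)
    (fun i _ => succ_lt_norm_sub_nat i Re_lt).
  by rewrite norm_prod ltxx.
Qed.
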